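(* Let $G$ be a $1$-regular graph with $n$ vertices. Then the complement $\overline{G}$ is divergent if and only if $n\geq 6$.
   Context: All graphs are finite and simple. A complete in a graph is a set of pairwise adjacent vertices; a clique is a maximal complete. The clique graph $K(G)$ is the intersection graph of the cliques of $G$. Iterated clique graphs: $K^0(G)=G$, $K^n(G)=K(K^{n-1}(G))$ for $n\ge 1$. $G$ is convergent if the sequence $(K^n(G))_{n\ge0}$ contains only finitely many graphs up to isomorphism, and divergent otherwise. *)

From mathcomp Require Import all_boot.
Set Implicit Arguments. Unset Strict Implicit. Unset Printing Implicit Defensive.

(* Simplicity (symmetry, irreflexivity) is imposed as a hypothesis where needed;
   the clique-graph construction below always produces simple graphs. *)
Record sgraph := SGraph { V : finType; adj : rel V }.
Arguments adj : clear implicits.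

Definition simple_graph (G : sgraph) : Prop :=
  symmetric (adj G) /\ irreflexive (adj G).

Definition complete (G : sgraph) (A : {set V G}) : bool :=
  [forall x in A, forall y in A, (x != y) ==> adj G x y].

Definition clique (G : sgraph) (A : {set V G}) : bool :=
  complete A && [forall B : {set V G}, (complete B && (A \subset B)) ==> (B == A)].

Definition clique_type (G : sgraph) := {A : {set V G} | clique A}.

Definition Kadj (G : sgraph) : rel (clique_type G) :=
  fun A B => (A != B) && (val A :&: val B != set0).

Definition K (G : sgraph) : sgraph := @SGraph (clique_type G) (@Kadj G).

Definition Kiter (n : nat) (G : sgraph) : sgraph := iter n K G.

Definition isomorphic (G H : sgraph) : Prop :=
  exists f : V G -> V H, bijective f /\ forall x y, adj H (f x) (f y) = adj G x y.

(* Convergent: the sequence (K^n G) contains only finitely many graphs up to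
   isomorphism, i.e. there is a finite list of graphs to one of which every
   K^n G is isomorphic. *)
Definition convergent (G : sgraph) : Prop :=
  exists L : seq sgraph, forall n, exists2 i, i < size L & isomorphic (Kiter n G) (nth G L i).

Definition divergent (G : sgraph) : Prop := ~ convergent G.

Definition complement (G : sgraph) : sgraph :=
  @SGraph (V G) (fun x y => (x != y) && ~~ adj G x y).

Definition regular (k : nat) (G : sgraph) : Prop :=
  forall x : V G, #|[set y | adj G x y]| = k.

(** The complement of a perfect matching on 2m vertices is the cocktail-party
    graph: x and y are adjacent unless y is x or its partner s x.  Its cliques
    are exactly the sets picking one vertex out of each pair {x, s x}; there
    are 2^m of them, two of them are disjoint iff they are complementary, and
    complementation pairs them up.  Hence for m > 0 the clique graph of the
    cocktail-party graph on 2m vertices is the cocktail-party graph on 2^m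
    vertices.  Since 2^m = 2m for m = 1, 2 and 2^m > 2m for m >= 3, the orders
    of the iterated clique graphs are constant when 2m < 6 and strictly
    increasing when 2m >= 6; and a sequence of finite graphs has finitely many
    isomorphism types iff their orders are bounded. *)

From mathcomp Require Import all_boot zify.
Set Implicit Arguments. Unset Strict Implicit. Unset Printing Implicit Defensive.

Section PairTransversals.

Variables (T : finType) (s : T -> T).

Definition pair_transversal (A : {set T}) : bool :=
  [forall x, (x \in A) == (s x \notin A)].

Lemma pair_transversalP (A : {set T}) :
  reflect (forall x, (x \in A) = (s x \notin A)) (pair_transversal A).
Proof. by apply: (iffP forallP) => A_s x; apply/eqP/A_s. Qed.

Lemma pair_transversalC (A : {set T}) : pair_transversal A -> pair_transversal (~: A).
Proof.
by move/pair_transversalP=> A_s; apply/pair_transversalP => x; rewrite !inE A_s !negbK.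
Qed.

Lemma pair_transversal_disjoint (A B : {set T}) :
  pair_transversal A -> pair_transversal B -> (A :&: B == set0) = (B == ~: A).
Proof.
move=> /pair_transversalP A_s /pair_transversalP B_s.
apply/eqP/eqP => [AB0|->]; last exact: setICr.
apply/setP => x; rewrite inE; apply/idP/idP => [xB|xNA].
  by apply: contraT; rewrite negbK => xA; rewrite -(in_set0 x) -AB0 inE xA.
rewrite B_s; apply: contraT; rewrite negbK => sxB.
by rewrite -(in_set0 (s x)) -AB0 inE sxB andbT -[s x \in A]negbK -A_s.
Qed.

Hypotheses (sK : involutive s) (s_fpfree : forall x, s x != x).

Lemma exists_pair_transversal : exists A, pair_transversal A.
Proof.
exists [set x | enum_rank x < enum_rank (s x)]; apply/pair_transversalP => x.
rewrite !inE sK -leqNgt [X in _ = X]leq_eqVlt.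
by rewrite val_eqE (inj_eq enum_rank_inj) eq_sym (negbTE (s_fpfree x)).
Qed.

Lemma card_pair_transversal (A : {set T}) : pair_transversal A -> #|T| = #|A|.*2.
Proof.
move/pair_transversalP=> A_s; rewrite -(cardsC A) -addnn.
have -> : ~: A = s @: A.
  apply/setP => x; rewrite inE; apply/idP/imsetP => [xNA|[y yA ->]].
    by exists (s x); rewrite ?sK // -[s x \in A]negbK -A_s.
  by rewrite -A_s.
by rewrite card_imset //; apply: inv_inj.
Qed.

Lemma pair_transversal_setI_inj (A : {set T}) : pair_transversal A ->
  {in pair_transversal &, injective (fun B => B :&: A)}.
Proof.
move=> /pair_transversalP A_s B C /pair_transversalP B_s /pair_transversalP C_s BCA.
apply/setP => x; case xA: (x \in A).
  by move/setP/(_ x): BCA; rewrite !inE xA !andbT.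
move/setP/(_ (s x)): BCA; rewrite !inE -[s x \in A]negbK -A_s xA !andbT.
by move=> sxBC; rewrite B_s C_s sxBC.
Qed.

Lemma pair_transversal_extend (A S : {set T}) : pair_transversal A -> S \subset A ->
  exists2 B, pair_transversal B & B :&: A = S.
Proof.
move=> /pair_transversalP A_s /subsetP SA.
have sA x : (s x \in A) = (x \notin A) by rewrite A_s sK.
exists (S :|: s @^-1: (A :\: S)).
  apply/pair_transversalP => x; rewrite !inE sK.
  case xA: (x \in A); rewrite sA xA /=.
    have sxS : (s x \in S) = false by apply: (contraFF (SA (s x))); rewrite sA xA.
    by rewrite sxS /= orbF andbT negbK.
  by rewrite (contraFF (SA x)) //= andbT orbF.
apply/setP => x; rewrite !inE sA.
by case xA: (x \in A); rewrite ?andbT ?andbF ?orbF // (contraFF (SA x) xA).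
Qed.

Lemma card_pair_transversals (A : {set T}) : pair_transversal A ->
  #|[set B | pair_transversal B]| = 2 ^ #|A|.
Proof.
move=> A_tr; rewrite -card_powerset -(card_in_imset (f := fun B => B :&: A)).
  congr #|pred_of_set _|; apply/setP => S; rewrite inE.
  apply/imsetP/idP => [[B _ ->]|SA]; first exact: subsetIr.
  by have [B B_tr BA] := pair_transversal_extend A_tr SA; exists B; rewrite ?inE.
by move=> B C; rewrite !inE; apply: pair_transversal_setI_inj.
Qed.

End PairTransversals.

Definition cocktail_party (H : sgraph) (s : V H -> V H) : Prop :=
  [/\ involutive s, forall x, s x != x & forall x y, adj H x y = (x != y) && (y != s x)].

Section CocktailParty.

Variables (H : sgraph) (s : V H -> V H).
Hypothesis cpH : cocktail_party s.

Lemma complete_cocktail_party (A : {set V H}) :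
  complete A = [forall x in A, s x \notin A].
Proof.
have [_ s_fpfree adjE] := cpH.
apply/forall_inP/forall_inP => A_compl x xA.
  apply/negP => sxA; have := forall_inP (A_compl x xA) _ sxA.
  by rewrite adjE eq_sym s_fpfree eqxx.
apply/forall_inP => y yA; apply/implyP => xy; rewrite adjE xy /=.
by apply: contraNneq (A_compl x xA) => <-.
Qed.

Lemma clique_cocktail_party (A : {set V H}) : clique A = pair_transversal s A.
Proof.
have [sK s_fpfree _] := cpH.
rewrite /clique complete_cocktail_party; apply/idP/idP.
- case/andP => /forall_inP A_compl /forallP A_max; apply/pair_transversalP => x.
  case xA: (x \in A); first by rewrite A_compl.
  apply/esym/negbF; apply: contraT => sxNA.
  have xAcompl : [forall y in x |: A, s y \notin x |: A].
    apply/forall_inP => y /setU1P [->|yA]; rewrite !inE negb_or ?s_fpfree ?sxNA //.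
    rewrite A_compl // andbT; apply: contraNneq sxNA => <-.
    by rewrite sK.
  have := A_max (x |: A); rewrite complete_cocktail_party xAcompl subsetUr.
  by move/eqP/setP/(_ x); rewrite setU11 xA.
- move/pair_transversalP => A_s; apply/andP; split.
    by apply/forall_inP => x xA; rewrite -A_s.
  apply/forallP => B; apply/implyP; rewrite complete_cocktail_party.
  case/andP => /forall_inP B_compl AB; rewrite eqEsubset AB andbT.
  apply/subsetP => y yB; apply: contraT => yNA.
  by move: (B_compl y yB); rewrite (subsetP AB) // -[s y \in A]negbK -A_s.
Qed.

Lemma clique_setC (A : clique_type H) : clique (~: val A).
Proof.
by rewrite clique_cocktail_party pair_transversalC // -clique_cocktail_party (valP A).
Qed.

Definition clique_compl (A : clique_type H) : clique_type H :=
  exist _ (~: val A) (clique_setC A).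

Lemma cocktail_party_K : 0 < #|V H| -> @cocktail_party (K H) clique_compl.
Proof.
move=> /card_gt0P [x0 _]; split.
- by move=> A; apply: val_inj; rewrite /= setCK.
- move=> A; apply/negP => /eqP/(congr1 val)/setP/(_ x0).
  by rewrite inE; case: (x0 \in val A).
- move=> A B; rewrite /= /Kadj; congr (_ && _).
  by rewrite (@pair_transversal_disjoint _ s) -?clique_cocktail_party ?(valP A) ?(valP B).
Qed.

Lemma card_cocktail_party_even : ~~ odd #|V H|.
Proof.
have [sK s_fpfree _] := cpH.
have [A /(card_pair_transversal sK) ->] := exists_pair_transversal sK s_fpfree.
by rewrite odd_double.
Qed.

Lemma card_K_cocktail_party : #|V (K H)| = 2 ^ #|V H|./2.
Proof.
have [sK s_fpfree _] := cpH.
have [A A_tr] := exists_pair_transversal sK s_fpfree.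
rewrite (card_pair_transversal sK A_tr) doubleK /= card_sig.
rewrite -(card_pair_transversals sK A_tr).
by apply: eq_card => B; rewrite !inE clique_cocktail_party.
Qed.

End CocktailParty.

Lemma cocktail_party_complement (G : sgraph) : simple_graph G -> regular 1 G ->
  exists s, @cocktail_party (complement G) s.
Proof.
move=> [adj_sym adj_irr] G1reg.
pose s x := odflt x [pick y | adj G x y].
have adjE x y : adj G x y = (y == s x).
  have [y0 /setP N_x] := cards1P (introT eqP (G1reg x)).
  have {}N_x z : adj G x z = (z == y0) by have := N_x z; rewrite !inE.
  rewrite /s N_x; case: pickP => [z|/(_ y0)] /=; first by rewrite N_x => /eqP->.
  by rewrite N_x eqxx.
exists s; split=> [x|x|x y] /=; last by rewrite adjE.
  by apply/esym/eqP; rewrite -adjE adj_sym adjE.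
by apply: contraFneq (adj_irr x) => sx; rewrite adjE sx.
Qed.

Lemma card_K_le1 (H : sgraph) : #|V H| <= 1 -> #|V (K H)| <= 1.
Proof.
move=> /card_le1_eqP H_le1.
have cliqueT (A : {set V H}) : clique A -> A = setT.
  case/andP=> _ /forallP/(_ setT); rewrite subsetT andbT => /implyP TA.
  apply/esym/eqP/TA/forall_inP => x _; apply/forall_inP => y _.
  by rewrite (H_le1 x y) ?inE ?eqxx.
apply/card_le1_eqP => A B _ _; apply: val_inj.
by rewrite (cliqueT _ (valP A)) (cliqueT _ (valP B)).
Qed.

Lemma convergent_bounded (G : sgraph) : convergent G ->
  exists N, forall n, #|V (Kiter n G)| <= N.
Proof.
move=> [L G_L]; exists (\max_(i < size L) #|V (nth G L i)|) => n.
have [i iL [f [f_bij _]]] := G_L n.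
rewrite (bij_eq_card f_bij).
exact: (leq_bigmax (F := fun i : 'I_(size L) => #|V (nth G L i)|) (Ordinal iL)).
Qed.

Definition adjacency_code {N : nat} (c : 'I_N.+1) : finType :=
  {ffun 'I_c * 'I_c -> bool}.

Definition graph_of_code {N : nat} (p : {c : 'I_N.+1 & adjacency_code c}) : sgraph :=
  @SGraph 'I_(tag p) (fun i j => tagged p (i, j)).

Definition graphs_upto (N : nat) : seq sgraph :=
  map graph_of_code (enum {: {c : 'I_N.+1 & adjacency_code c}}).

Lemma graphs_uptoP (N : nat) (H d : sgraph) : #|V H| <= N ->
  exists2 i, i < size (graphs_upto N) & isomorphic H (nth d (graphs_upto N) i).
Proof.
rewrite -ltnS => H_N.
pose F : adjacency_code (Ordinal H_N) :=
  [ffun p => adj H (enum_val p.1) (enum_val p.2)].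
pose codes := enum {: {c : 'I_N.+1 & adjacency_code c}}.
have F_codes : Tagged adjacency_code F \in codes by rewrite mem_enum.
exists (index (Tagged adjacency_code F) codes); first by rewrite size_map index_mem.
rewrite (nth_map (Tagged adjacency_code F)) ?index_mem // nth_index //.
exists enum_rank; split; first exact: enum_rank_bij.
by move=> x y; rewrite /= ffunE /= !enum_rankK.
Qed.

Lemma bounded_convergent (G : sgraph) :
  (exists N, forall n, #|V (Kiter n G)| <= N) -> convergent G.
Proof. by move=> [N G_N]; exists (graphs_upto N) => n; apply: graphs_uptoP. Qed.

Lemma Kiter_cocktail_party (H : sgraph) (s : V H -> V H) :
  cocktail_party s -> 0 < #|V H| ->
  forall n, #|V (Kiter n H)| = iter n (fun c => 2 ^ c./2) #|V H|.
Proof.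
move=> cpH H_gt0.
suff Kn_cp n : exists2 sn : V (Kiter n H) -> V (Kiter n H), cocktail_party sn &
    #|V (Kiter n H)| = iter n (fun c => 2 ^ c./2) #|V H|.
  by move=> n; have [] := Kn_cp n.
have iter_gt0 m : 0 < iter m (fun c => 2 ^ c./2) #|V H|.
  by case: m => //= m; rewrite expn_gt0.
elim: n => [|n [sn cp_n card_n]]; first by exists s.
have Kn_gt0 : 0 < #|V (Kiter n H)| by rewrite card_n.
exists (clique_compl cp_n); first exact: cocktail_party_K.
by rewrite iterS -card_n (card_K_cocktail_party cp_n).
Qed.

Lemma double_lt_exp2 m : 3 <= m -> m.*2 < 2 ^ m.
Proof.
elim: m => // m IHm; rewrite ltnS leq_eqVlt => /predU1P [<- // | m_gt2].
by have := IHm m_gt2; rewrite expnS; lia.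
Qed.

Lemma iter_half_exp2_fixed n c : c \in [:: 2; 4] ->
  iter n (fun c => 2 ^ c./2) c = c.
Proof. by move=> c24; elim: n => //= n ->; move: c24; rewrite !inE => /orP [] /eqP ->. Qed.

Lemma iter_half_exp2_growth n c : 6 <= c -> ~~ odd c ->
  c + n <= iter n (fun c => 2 ^ c./2) c.
Proof.
elim: n c => [|n IHn] c c_ge6 c_even; first by rewrite addn0.
have c_half : (c./2).*2 = c by rewrite halfK (negbTE c_even) subn0.
have c_lt : c < 2 ^ c./2 by rewrite -{1}c_half double_lt_exp2 //; lia.
have fc_ge6 : 6 <= 2 ^ c./2 := leq_trans c_ge6 (ltnW c_lt).
have fc_even : ~~ odd (2 ^ c./2) by rewrite oddX orbF -lt0n half_gt0 (leq_trans _ c_ge6).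
rewrite iterSr; apply: leq_trans _ (IHn _ fc_ge6 fc_even).
by rewrite addnS -addSn leq_add2r.
Qed.

Theorem mainTheorem1 (G : sgraph) :
  simple_graph G -> regular 1 G ->
  (divergent (complement G) <-> 6 <= #|V G|).
Proof.
move=> simG regG; have [s cpG] := cocktail_party_complement simG regG.
have G_even : ~~ odd #|V G| := card_cocktail_party_even cpG.
have [G0 | G_gt0] := posnP #|V G|.
  (* The empty graph has the single clique set0, and K of a one-vertex graph has one vertex. *)
  rewrite G0; split=> // divG; case: divG; apply: bounded_convergent; exists 1.
  by elim=> [|n IHn]; [rewrite /= G0 | exact: card_K_le1].
have orders n : #|V (Kiter n (complement G))| = iter n (fun c => 2 ^ c./2) #|V G|.
  exact: Kiter_cocktail_party cpG G_gt0 n.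
split=> [divG | G_ge6 /convergent_bounded [N bounded]].
  rewrite leqNgt; apply/negP => G_lt6; apply: divG; apply: bounded_convergent.
  exists #|V G| => n; rewrite orders iter_half_exp2_fixed //.
  by move: G_gt0 G_lt6 G_even; case: #|V G| => [|[|[|[|[|[|]]]]]].
have := bounded N.+1; rewrite orders.
by have := iter_half_exp2_growth N.+1 G_ge6 G_even; lia.
Qed.
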